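(* For all real numbers $a,b,c>0$ (note $ab^2+bc^2+ca^2-abc>0$ for such $a,b,c$), \[ \frac{(a^4+b^4+c^4)^{3/2}}{\sqrt{ab^2+bc^2+ca^2-abc}\,\sqrt{a+b+c}} \leq \frac{a^5}{\sqrt{ca+b^2}} + \frac{b^5}{\sqrt{ab+c^2}} + \frac{c^5}{\sqrt{bc+a^2}}. \] *)

From Stdlib Require Import Reals.

(* Weighting a, b, c by a^4, b^4, c^4 and putting t = a / sqrt (c a + b^2) (and
   cyclically), the right-hand side is sum w t, while sum w / t^2 is
   sum a^2 (c a + b^2), which factors as (a b^2 + b c^2 + c a^2 - a b c)(a + b + c).
   The inequality is then Hoelder's (sum w)^3 <= (sum w t)^2 (sum w / t^2), which
   follows by summing the tangent-line bounds of the convex map t |-> 1 / t^2 at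
   the weighted mean m = sum w t / sum w. *)
From Stdlib Require Import Reals Lra Psatz.
Open Scope R_scope.

Lemma inv_sq_ge_tangent (t m : R) : 0 < t -> 0 < m ->
  3 / m^2 - 2 * t / m^3 <= 1 / t^2.
Proof.
  intros ht hm.
  assert (E : 1 / t^2 - (3 / m^2 - 2 * t / m^3)
              = (m - t)^2 * (m + 2*t) / (t^2 * m^3)) by (field; lra).
  assert (0 <= (m - t)^2 * (m + 2*t) / (t^2 * m^3)).
  { apply Rmult_le_pos.
    - apply Rmult_le_pos; [apply pow2_ge_0 | lra].
    - apply Rlt_le, Rinv_0_lt_compat, Rmult_lt_0_compat; apply pow_lt; lra. }
  lra.
Qed.

Lemma holder3 (w1 w2 w3 t1 t2 t3 : R) :
  0 < w1 -> 0 < w2 -> 0 < w3 -> 0 < t1 -> 0 < t2 -> 0 < t3 ->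
  (w1 + w2 + w3)^3
  <= (w1*t1 + w2*t2 + w3*t3)^2 * (w1/t1^2 + w2/t2^2 + w3/t3^2).
Proof.
  intros h1 h2 h3 g1 g2 g3.
  set (W := w1 + w2 + w3); set (A := w1*t1 + w2*t2 + w3*t3).
  assert (hW : 0 < W) by (unfold W; lra).
  assert (hA : 0 < A) by (unfold A; nra).
  set (m := A / W).
  assert (hm : 0 < m) by (unfold m; apply Rdiv_lt_0_compat; lra).
  assert (tangent_sum : W / m^2 <= w1/t1^2 + w2/t2^2 + w3/t3^2).
  { assert (hAm : A = W * m) by (unfold m; field; lra).
    assert (E : W / m^2 = w1 * (3 / m^2 - 2 * t1 / m^3)
                        + w2 * (3 / m^2 - 2 * t2 / m^3)
                        + w3 * (3 / m^2 - 2 * t3 / m^3)).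
    { transitivity (3 * W / m^2 - 2 * A / m^3).
      - rewrite hAm; field; lra.
      - unfold W, A; field; lra. }
    assert (tangent : forall w t, 0 < w -> 0 < t ->
              w * (3 / m^2 - 2 * t / m^3) <= w / t^2).
    { intros w t hw ht.
      replace (w / t^2) with (w * (1 / t^2)) by (field; lra).
      apply Rmult_le_compat_l; [lra | now apply inv_sq_ge_tangent]. }
    rewrite E.
    pose proof (tangent w1 t1 h1 g1); pose proof (tangent w2 t2 h2 g2);
      pose proof (tangent w3 t3 h3 g3).
    lra. }
  replace (W^3) with (A^2 * (W / m^2)) by (unfold m; field; lra).
  apply Rmult_le_compat_l; [nra | exact tangent_sum].
Qed.

Lemma cyclic_cubic_pos (a b c : R) : 0 < a -> 0 < b -> 0 < c ->
  0 < a*b^2 + b*c^2 + c*a^2 - a*b*c.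
Proof.
  intros ha hb hc.
  assert (0 < a*b^2) by (apply Rmult_lt_0_compat; [lra | apply pow_lt; lra]).
  assert (0 < b*c^2) by (apply Rmult_lt_0_compat; [lra | apply pow_lt; lra]).
  assert (0 < c*a^2) by (apply Rmult_lt_0_compat; [lra | apply pow_lt; lra]).
  destruct (Rle_dec c b).
  - assert (a*b*c <= a*b^2) by (simpl; nra). lra.
  - destruct (Rle_dec a c).
    + assert (a*b*c <= b*c^2) by (simpl; nra). lra.
    + assert (a*b*c <= c*a^2) by (simpl; nra). lra.
Qed.

Lemma cyclic_cubic_mul_sum (a b c : R) :
  (a*b^2 + b*c^2 + c*a^2 - a*b*c) * (a + b + c)
  = a^2 * (c*a + b^2) + b^2 * (a*b + c^2) + c^2 * (b*c + a^2).
Proof. ring. Qed.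

Lemma Rpower_3_2 (x : R) : 0 < x -> Rpower x (3/2) = x * sqrt x.
Proof.
  intros hx.
  replace (3/2) with (1 + /2) by field.
  now rewrite Rpower_plus, Rpower_1, Rpower_sqrt.
Qed.

Lemma Rpower_3_2_div_sqrt_le (S P T : R) : 0 < S -> 0 < P -> 0 <= T ->
  S^3 <= T^2 * P -> Rpower S (3/2) / sqrt P <= T.
Proof.
  intros hS hP hT H.
  rewrite Rpower_3_2 by exact hS.
  assert (hsP : 0 < sqrt P) by (apply sqrt_lt_R0; lra).
  assert (hsS : 0 < sqrt S) by (apply sqrt_lt_R0; lra).
  pose proof (sqrt_sqrt P (Rlt_le _ _ hP)) as eP.
  pose proof (sqrt_sqrt S (Rlt_le _ _ hS)) as eS.
  apply (Rmult_le_reg_r (sqrt P) _ _ hsP).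
  rewrite Rdiv_def, Rmult_assoc, Rinv_l, Rmult_1_r by lra.
  assert ((S * sqrt S)^2 <= (T * sqrt P)^2).
  { replace ((S * sqrt S)^2) with (S^2 * (sqrt S * sqrt S)) by ring.
    replace ((T * sqrt P)^2) with (T^2 * (sqrt P * sqrt P)) by ring.
    rewrite eS, eP; lra. }
  assert (0 < S * sqrt S) by nra.
  assert (0 <= T * sqrt P) by nra.
  nra.
Qed.

Lemma holder_term (a x : R) : 0 < a -> 0 < x ->
  0 < a / sqrt x /\ a^4 * (a / sqrt x) = a^5 / sqrt x
  /\ a^4 / (a / sqrt x)^2 = a^2 * x.
Proof.
  intros ha hx.
  assert (hs : 0 < sqrt x) by (apply sqrt_lt_R0; lra).
  pose proof (sqrt_sqrt x (Rlt_le _ _ hx)) as ex.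
  split; [apply Rdiv_lt_0_compat; lra |].
  split; [field; lra |].
  rewrite <- ex at 2; field; lra.
Qed.

Theorem mainTheorem7 (a b c : R) (ha : 0 < a) (hb : 0 < b) (hc : 0 < c) :
  Rpower (a^4 + b^4 + c^4) (3/2)
    / (sqrt (a*b^2 + b*c^2 + c*a^2 - a*b*c) * sqrt (a + b + c))
  <= a^5 / sqrt (c*a + b^2) + b^5 / sqrt (a*b + c^2) + c^5 / sqrt (b*c + a^2).
Proof.
  pose proof (cyclic_cubic_pos a b c ha hb hc) as hQ.
  destruct (holder_term a (c*a + b^2) ha ltac:(nra)) as [t1 [e1 f1]].
  destruct (holder_term b (a*b + c^2) hb ltac:(nra)) as [t2 [e2 f2]].
  destruct (holder_term c (b*c + a^2) hc ltac:(nra)) as [t3 [e3 f3]].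
  pose proof (holder3 _ _ _ _ _ _
    (pow_lt a 4 ha) (pow_lt b 4 hb) (pow_lt c 4 hc) t1 t2 t3) as H.
  rewrite e1, e2, e3, f1, f2, f3, <- cyclic_cubic_mul_sum in H.
  rewrite <- sqrt_mult_alt by lra.
  apply Rpower_3_2_div_sqrt_le; [| nra | | exact H].
  - pose proof (pow_lt a 4 ha); pose proof (pow_lt b 4 hb);
      pose proof (pow_lt c 4 hc); lra.
  - apply Rplus_le_le_0_compat; [apply Rplus_le_le_0_compat |];
      apply Rlt_le, Rdiv_lt_0_compat;
      (apply pow_lt; assumption) || (apply sqrt_lt_R0; nra).
Qed.
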